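(* Let $n$ be a positive integer and $r$ an odd prime. Let $R=R_{n,r}$ be an extraspecial group of order $r^{2n+1}$ and exponent $r$, let $A=A_{n,r}\leqslant\operatorname{Aut}(R)$ be a subgroup isomorphic to $Sp_{2n}(r)$ which centralizes $Z(R)$, and let $X=X_{n,r}=RA$ be the natural semidirect product. Let $p$ be a prime with $p\equiv 1\pmod r$, let $V=V_{n,r}$ be a faithful irreducible $\mathbb{F}_pX$-module of dimension $r^n$, and let $G=G_{n,r}=VX$ be the natural semidirect product. Then (1) $F(G)=V$; (2) $F^*(G/V)=F(G/V)=VR/V\cong R$; (3) $G/VR\cong A\cong Sp_{2n}(r)$.
   Context: $F(H)$ denotes the Fitting subgroup of a finite group $H$ and $F^*(H)=F(H)E(H)$ its generalized Fitting subgroup, where $E(H)$ is the subgroup generated by all subnormal quasisimple subgroups of $H$. Such subgroups $A$ and modules $V$ exist (the stated properties hold for any such choices). *)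

From mathcomp Require Import all_boot all_order all_algebra all_fingroup all_solvable.
Set Implicit Arguments. Unset Strict Implicit. Unset Printing Implicit Defensive.
Import GRing.Theory.
Local Open Scope group_scope.

Definition quasisimple (gT : finGroupType) (H : {set gT}) : bool :=
  (H^`(1) == H) && simple (H / 'Z(H)).

Definition layer (gT : finGroupType) (H : {set gT}) : {set gT} :=
  << \bigcup_(K : {group gT} | (K <|<| H) && quasisimple K) K >>.

Definition genFitting (gT : finGroupType) (H : {set gT}) : {set gT} :=
  'F(H) * layer H.

(* Standard symplectic Gram matrix J on F^(2n) (size written (n.*2).-1.+1,
   which equals 2n for n > 0): J_{i,i+n} = 1, J_{i+n,i} = -1, else 0. *)
Definition sympJ (F : pzRingType) (n : nat) : 'M[F]_((n.*2).-1.+1) :=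
  \matrix_(i, j) (if (j : nat) == (i + n)%N then 1%R
                  else if (i : nat) == (j + n)%N then (-1)%R else 0%R).

Definition Sp (n r : nat) : {set {'GL_(n.*2)['F_r]}} :=
  [set M : {'GL_(n.*2)['F_r]} |
     (GLval M *m sympJ 'F_r n *m (GLval M)^T == sympJ 'F_r n)%R].

From mathcomp Require Import all_boot all_order all_algebra all_fingroup all_solvable.
From mathcomp Require Import mxrepresentation mxabelem zify.
Set Implicit Arguments. Unset Strict Implicit. Unset Printing Implicit Defensive.
Import GRing.Theory.

(* The Fitting subgroups come from one fact about a semidirect product
   K ><| H = G with K a p-group and C_H(K) = 1: the normal subgroup C_G(K)
   meets H trivially, so |C_G(K)| divides |K|; if moreover O_p(H) = 1, the
   modular law gives O_p(G) = K, hence C_G(K) <= K and, as O_p'(G)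
   centralizes O_p(G), F(G) = K.  For X = R ><| A this needs
   O_r(Sp_2n(r)) = 1, which holds because the natural module is faithful and
   irreducible: a transvection t_v maps u to u + (u, v) v, so an invariant
   subspace containing u <> 0 contains every v not orthogonal to u.  For
   G = V ><| X it needs O_p(X) <= F(X) = R, an r-group.  Finally C(F) <= F,
   transported to G/V ~ X, kills the layer: a subnormal quasisimple subgroup
   lies in F or centralizes it, so it is nilpotent and perfect, hence
   trivial. *)

Section SymplecticForm.
Variables (F : fieldType) (n : nat).
Hypothesis n_gt0 : (0 < n)%N.
Local Notation d := (n.*2).-1.+1.
Local Notation J := (sympJ F n).
Local Open Scope ring_scope.
Implicit Types u v w : 'rV[F]_d.

Definition sympf (u v : 'rV[F]_d) : F := (u *m J *m v^T) 0 0.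

Definition transvection (v : 'rV[F]_d) : 'M[F]_d := 1%:M + J *m v^T *m v.

Lemma sympJ_skew : J^T = - J.
Proof.
apply/matrixP => i j; rewrite !mxE.
by case: eqP => ?; case: eqP => ? //=; rewrite ?opprK ?oppr0 //; lia.
Qed.

Lemma sympfDr u v w : sympf u (v + w) = sympf u v + sympf u w.
Proof. by rewrite /sympf linearD mulmxDr mxE. Qed.

Lemma mul_transvection u v : u *m transvection v = u + sympf u v *: v.
Proof.
by rewrite mulmxDr mulmx1 !mulmxA [u *m J *m v^T]mx11_scalar mul_scalar_mx.
Qed.

Lemma sympJ_col_partner (i : 'I_d) :
  exists j : 'I_d, col j J = delta_mx i 0 \/ col j J = - delta_mx i 0.
Proof.
have lt_d (k : 'I_d) : (k < n + n)%N.
  by rewrite addnn -[X in (_ < X)%N]prednK ?double_gt0.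
have lt_i := lt_d i.
have [lt_in | le_ni] := ltnP i n.
- exists (inord (i + n)); left; apply/matrixP => k l.
  have := lt_d k; rewrite !mxE ord1 eqxx andbT inordK; last by lia.
  move=> ?; rewrite eqn_add2r -val_eqE /= [(i : nat) == k]eq_sym.
  by case: eqP => // _; case: eqP => //; lia.
- exists (inord (i - n)); right; apply/matrixP => k l.
  have := lt_d k; rewrite !mxE ord1 eqxx andbT inordK; last by lia.
  move=> ?; rewrite subnK // -val_eqE /=.
  by case: eqP => ?; [lia | case: eqP; rewrite ?oppr0].
Qed.

Lemma sympf_nondegenerate u :
  u != 0 -> exists j : 'I_d, sympf u (delta_mx 0 j) != 0.
Proof.
case/rV0Pn => i ui; have [j Jj] := sympJ_col_partner i.
exists j; rewrite /sympf trmx_delta -mulmxA -colE.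
by case: Jj => ->; rewrite ?mulmxN -colE !mxE ?oppr_eq0.
Qed.

Hypothesis two_neq0 : 2%:R != 0 :> F.

Lemma sympJ_alt v : v *m J *m v^T = 0.
Proof.
have : (v *m J *m v^T)^T = - (v *m J *m v^T).
  by rewrite !trmx_mul trmxK sympJ_skew mulNmx mulmxN mulmxA.
move: (v *m J *m v^T) => s /(congr1 (fun M : 'M_1 => M 0 0)).
rewrite !mxE => s_skew.
apply/matrixP => i j; rewrite !ord1 mxE; apply/eqP.
have : s 0 0 * 2%:R == 0 by rewrite mulr_natr mulr2n {1}s_skew addNr.
by rewrite mulf_eq0 (negPf two_neq0) orbF.
Qed.

Lemma transvection_sqr0 v : J *m v^T *m v *m (J *m v^T *m v) = 0.
Proof.
have -> : J *m v^T *m v *m (J *m v^T *m v) = J *m v^T *m (v *m J *m v^T) *m v.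
  by rewrite !mulmxA.
by rewrite sympJ_alt mulmx0 mul0mx.
Qed.

Lemma transvection_unit v : transvection v \in unitmx.
Proof.
suff: transvection v *m (1%:M - J *m v^T *m v) = 1%:M by case/mulmx1_unit.
by rewrite mulmxDl mul1mx mulmxBr mulmx1 transvection_sqr0 subr0 addrNK.
Qed.

Lemma transvection_sympJ v : transvection v *m J *m (transvection v)^T = J.
Proof.
have trK : (J *m v^T *m v)^T = - (v^T *m v *m J).
  by rewrite !trmx_mul trmxK sympJ_skew !mulmxN mulmxA.
have KJK : J *m v^T *m v *m J *m (v^T *m v *m J) = 0.
  have -> : J *m v^T *m v *m J *m (v^T *m v *m J)
           = J *m v^T *m (v *m J *m v^T) *m v *m J by rewrite !mulmxA.
  by rewrite sympJ_alt mulmx0 !mul0mx.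
rewrite /transvection linearD /= trmx1 trK mulmxDl mul1mx mulmxDr mulmx1 mulmxDl.
by rewrite !mulmxN KJK oppr0 addr0 !mulmxA addrK.
Qed.
End SymplecticForm.

Section SymplecticGroup.
Variables (n r : nat).
Hypotheses (n_gt0 : (0 < n)%N) (r_pr : prime r) (r_odd : odd r).
Local Notation d := (n.*2).-1.+1.
Local Open Scope ring_scope.
Implicit Types v : 'rV['F_r]_d.

Lemma group_set_Sp : group_set (Sp n r).
Proof.
apply/group_setP; split=> [|x y]; rewrite !inE; first by rewrite mul1mx trmx1 mulmx1.
move=> /eqP xJ /eqP yJ; rewrite GL_MxE trmx_mul.
by rewrite -!mulmxA (mulmxA (GLval y)) (mulmxA _ (GLval y)^T) yJ mulmxA xJ.
Qed.
Canonical Sp_group := group group_set_Sp.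

Lemma Fp_two_neq0 : 2%:R != 0 :> 'F_r.
Proof.
rewrite -(dvdn_pcharf (pchar_Fp r_pr)); apply: contraL r_odd.
move=> /(dvdn_leq (isT : (0 < 2)%N)) r_le2.
by have /eqP-> : r == 2%N by rewrite eqn_leq r_le2 prime_gt1.
Qed.

Definition Sp_transvection v : {'GL_(n.*2)['F_r]} :=
  Sub (transvection v) (transvection_unit n_gt0 Fp_two_neq0 v).

Lemma Sp_transvection_Sp v : Sp_transvection v \in Sp n r.
Proof. by rewrite inE /= (transvection_sympJ n_gt0 Fp_two_neq0). Qed.

Definition Sp_repr := subg_repr (GLrepr 'F_r (n.*2).-1) (subsetT (Sp n r)).

Lemma mx_irr_Sp : mx_irreducible Sp_repr.
Proof.
apply/mx_irrP; split=> // U Umod /rowV0Pn[u uU u_nz].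
have nonorth_sub v : sympf u v != 0 -> (v <= U)%MS.
  move=> uv; have := mxmoduleP Umod _ (Sp_transvection_Sp v).
  move/(submx_trans (submxMr _ uU)); rewrite /= mul_transvection.
  have uNU : (- u <= U)%MS by rewrite eqmx_opp.
  move/(addmx_sub uNU) => /(scalemx_sub (sympf u v)^-1).
  by rewrite addKr scalerA mulVf // scale1r.
have [j uj] := sympf_nondegenerate n_gt0 u_nz.
rewrite -sub1mx; apply/row_subP => i; set w := row i 1%:M.
have [uw | uw] := eqVneq (sympf u w) 0; last exact: nonorth_sub.
rewrite -(addrK (delta_mx 0 j) w) addmx_sub ?eqmx_opp ?nonorth_sub //.
by rewrite sympfDr uw add0r.
Qed.

Lemma pcore_Sp : ('O_r(Sp n r) = 1)%g.
Proof.
apply: (pcore_faithful_mx_irr_pchar (pchar_Fp r_pr) mx_irr_Sp).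
exact/subg_mx_faithful/GLmx_faithful.
Qed.

End SymplecticGroup.

Local Open Scope group_scope.

Section SdprodFitting.
Variables (gT : finGroupType) (p : nat) (K H G : {group gT}).
Hypotheses (defG : K ><| H = G) (pK : p.-group K) (cHK : 'C_H(K) = 1).

Lemma sdprod_cent_pgroup : p.-group 'C_G(K).
Proof.
have [nKG sHG mulKH _ _] := sdprod_context defG.
have nCG : 'C_G(K) <| G := norm_normalI (norms_cent (normal_norm nKG)).
have tiCH : 'C_G(K) :&: H = 1 by rewrite setIAC (setIidPr sHG).
have nCH : H \subset 'N('C_G(K)) := subset_trans sHG (normal_norm nCG).
apply: pnat_dvd pK; rewrite -(dvdn_pmul2r (cardG_gt0 H)) -TI_cardMg //.
rewrite -norm_joinEr //.
by rewrite (sdprod_card defG) cardSg // join_subG normal_sub.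
Qed.

Hypothesis OpH : 'O_p(H) = 1.

Lemma sdprod_pcore : 'O_p(G) = K.
Proof.
have [nKG sHG mulKH _ _] := sdprod_context defG.
have sKO : K \subset 'O_p(G) := pcore_max pK nKG.
have sHO1 : H :&: 'O_p(G) \subset 'O_p(H).
  apply: pcore_max; first exact: pgroupS (subsetIr _ _) (pcore_pgroup _ _).
  exact: normalGI sHG (pcore_normal _ _).
rewrite OpH in sHO1.
by rewrite -[RHS]mulg1 -(trivgP sHO1) group_modl // mulKH (setIidPr (pcore_sub _ _)).
Qed.

Lemma sdprod_cent_sub : 'C_G(K) \subset K.
Proof.
have [nKG _ _ _ _] := sdprod_context defG.
have := pcore_max sdprod_cent_pgroup (norm_normalI (norms_cent (normal_norm nKG))).
by rewrite sdprod_pcore.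
Qed.

Lemma sdprod_Fitting : 'F(G) = K.
Proof.
rewrite -sdprod_pcore; apply: Fitting_eq_pcore; apply/trivgP.
have cOO : 'O_p^'(G) \subset 'C('O_p(G)).
  apply/commG1P/trivgP; rewrite -(TI_pcoreC p G G) setIC.
  by apply: commg_subI; rewrite subsetI subxx (subset_trans (pcore_sub _ _)) ?gFnorm.
have sOK : 'O_p^'(G) \subset K.
  by apply: subset_trans sdprod_cent_sub; rewrite subsetI pcore_sub -sdprod_pcore.
by rewrite -(TI_pcoreC p G G) subsetI subxx sdprod_pcore sOK.
Qed.

End SdprodFitting.

Section Layer.
Variable gT : finGroupType.
Implicit Types G K N : {group gT}.

Lemma perfect_cent_commg K N :
  K^`(1) = K -> K \subset 'C([~: K, N]) -> K \subset 'C(N).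
Proof.
move=> dK cK_KN; apply/commG1P.
have cKNK : [~: K, N, K] = 1 by apply/commG1P; rewrite centsC.
have cNKK : [~: N, K, K] = 1 by rewrite [[~: N, K]]commGC.
by have := three_subgroup cKNK cNKK; rewrite -derg1 dK.
Qed.

Lemma quasisimple_normal_subV_cent G N :
  quasisimple G -> N <| G -> G \subset N \/ G \subset 'C(N).
Proof.
case/andP=> /eqP dG simG /andP[sNG nNG].
have nZG : G \subset 'N('Z(G)) := normal_norm (center_normal G).
have nZN : N \subset 'N('Z(G)) := subset_trans sNG nZG.
have nsNZ : N / 'Z(G) <| G / 'Z(G) by apply: morphim_normal; apply/andP.
case/simpleP: simG => _ /(_ _ nsNZ) [NZ1 | NZG].
  right; rewrite centsC; apply: subset_trans (subsetIr G _).
  by rewrite -quotient_sub1 // NZ1.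
left; rewrite -dG; apply: der1_min => //.
have sGNZ : G \subset N <*> 'Z(G).
  rewrite -(quotientSGK nZG) ?joing_subr //.
  by rewrite -NZG quotientS ?joing_subl.
have nNZ : 'Z(G) \subset 'N(N) := subset_trans (center_sub G) nNG.
apply: abelianS (quotient_abelian _ (center_abelian G)).
by rewrite -(quotientYidl nNZ) quotientS.
Qed.

Lemma subnormal_quasisimple_subV_cent K G N :
  quasisimple K -> K <|<| G -> N <| G -> K \subset N \/ K \subset 'C(N).
Proof.
move=> qK; elim: {G}_.+1 {-2}G (ltnSn #|G|) N => // m IHm G leGm N snKG nsNG.
have [eKG | [H [snKH nsHG ltHG]]] := subnormalEr snKG.
  by rewrite eKG in qK *; apply: quasisimple_normal_subV_cent.
have sHG := proper_sub ltHG; have sKH := subnormal_sub snKH.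
have ltHm : #|H| < m := leq_trans (proper_card ltHG) leGm.
have [sKHN | cK_HN] := IHm H ltHm _ snKH (normalGI sHG nsNG).
  by left; apply: subset_trans sKHN (subsetIr _ _).
right; case/andP: qK => /eqP dK _; apply: perfect_cent_commg dK _.
apply: (subset_trans cK_HN); apply/centS/(subset_trans (commSg N sKH)).
apply: commg_subI; rewrite subsetI subxx /=.
  exact: subset_trans sHG (normal_norm nsNG).
exact: subset_trans (normal_sub nsNG) (normal_norm nsHG).
Qed.

Lemma layer_eq1 G : 'C_G('F(G)) \subset 'F(G) -> layer G = 1.
Proof.
move=> sCF; apply/trivgP; rewrite gen_subG.
apply/bigcupsP => K /andP[snKG qK].
have sKF : K \subset 'F(G).
  have [//|cKF] := subnormal_quasisimple_subV_cent qK snKG (Fitting_normal G).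
  by apply: subset_trans sCF; rewrite subsetI subnormal_sub.
case/andP: qK => /eqP dK _; apply/trivgP/eqP; apply: contraT => ntK.
have solK := nilpotent_sol (nilpotentS sKF (Fitting_nil G)).
by have := sol_der1_proper solK (subxx K) ntK; rewrite dK properxx.
Qed.

End Layer.

Lemma injm_cent_Fitting_sub (aT rT : finGroupType) (D G : {group aT})
    (f : {morphism D >-> rT}) :
  'injm f -> G \subset D -> 'C_G('F(G)) \subset 'F(G) ->
  'C_(f @* G)('F(f @* G)) \subset 'F(f @* G).
Proof.
move=> injf sGD sCF; have sFD := subset_trans (Fitting_sub G) sGD.
by rewrite -injm_Fitting // -injm_subcent // morphimS.
Qed.

Section SdprodQuotient.
Variables (gT : finGroupType) (K H G : {group gT}).
Hypothesis defG : K ><| H = G.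

Lemma sdprod_quotient_Fitting : 'F(G / K) = 'F(H) / K.
Proof.
have [_ _ mulKH nKH tiKH] := sdprod_context defG.
have [injf imfH] := isomP (quotient_isom nKH tiKH).
rewrite -mulKH quotientMidl -imfH -injm_Fitting // morphim_restrm.
by rewrite (setIidPr (Fitting_sub H)).
Qed.

Lemma sdprod_quotient_cent_Fitting_sub :
  'C_H('F(H)) \subset 'F(H) -> 'C_(G / K)('F(G / K)) \subset 'F(G / K).
Proof.
have [_ _ mulKH nKH tiKH] := sdprod_context defG.
have [injf imfH] := isomP (quotient_isom nKH tiKH).
by rewrite -mulKH quotientMidl -imfH; apply: injm_cent_Fitting_sub.
Qed.

End SdprodQuotient.

Lemma pcore_eq1_Fitting_pgroup (gT : finGroupType) (p q : nat) (G : {group gT}) :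
  p != q -> q.-group 'F(G) -> 'O_p(G) = 1.
Proof.
move=> neq_pq qF; rewrite -p_core_Fitting.
apply: card1_trivg (pnat_1 (pcore_pgroup _ _) _).
by apply: pgroupS (pcore_sub _ _) (pi_pgroup qF _); rewrite !inE eq_sym.
Qed.

Unset Implicit Arguments.

Theorem proposition2 (gT : finGroupType) (n r p : nat)
  (R A X V G : {group gT}) :
  (0 < n)%N -> prime r -> odd r ->
  (* R extraspecial of order r^(2n+1) and exponent r *)
  extraspecial R -> #|R| = (r ^ (n.*2).+1)%N -> exponent R = r ->
  (* A acts faithfully on R (so A <= Aut(R)), A centralizes Z(R), A ~ Sp_{2n}(r) *)
  'C_A(R) = 1 -> A \subset 'C('Z(R)) -> A \isog Sp n r ->
  (* X = R A, the natural semidirect product *)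
  R ><| A = X ->
  (* p prime, p = 1 mod r *)
  prime p -> p = 1 %[mod r] ->
  (* V a faithful irreducible F_p X-module of dimension r^n *)
  p.-abelem V -> #|V| = (p ^ (r ^ n))%N -> 'C_X(V) = 1 -> minnormal V X ->
  (* G = V X, the natural semidirect product *)
  V ><| X = G ->
  [/\ 'F(G) = V,
      genFitting (G / V) = 'F(G / V)
        /\ 'F(G / V) = (V <*> R) / V /\ (V <*> R) / V \isog R
    & G / (V <*> R) \isog A /\ A \isog Sp n r].
Proof.
move=> n_gt0 r_pr r_odd _ cardR _ cAR _ isoASp defX _ p_mod abelV _ cXV _ defG.
have rR : r.-group R by rewrite /pgroup cardR pnatX pnat_id.
have [nsRX _ _ _ _] := sdprod_context defX; have sRX := normal_sub nsRX.
have [_ _ _ nVX _] := sdprod_context defG.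
have OrA : 'O_r(A) = 1.
  by apply/eqP; rewrite (isog_eq1 (isog_pcore r isoASp)); apply/eqP/pcore_Sp.
have FX : 'F(X) = R := sdprod_Fitting defX rR cAR OrA.
have p_neq_r : p != r.
  by apply/eqP => p_r; move: p_mod; rewrite p_r modnn modn_small // prime_gt1.
have OpX : 'O_p(X) = 1 by apply: (pcore_eq1_Fitting_pgroup p_neq_r); rewrite FX.
have cFX : 'C_X('F(X)) \subset 'F(X) by rewrite FX (sdprod_cent_sub defX rR cAR OrA).
split; first exact: sdprod_Fitting defG (abelem_pgroup abelV) cXV OpX.
  split.
    by rewrite /genFitting layer_eq1 ?mulg1 ?(sdprod_quotient_cent_Fitting_sub defG).
  split; last by rewrite isog_sym; apply: sdprod_isog (sdprod_subr defG sRX).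
  by rewrite (sdprod_quotient_Fitting defG) FX quotientYidl ?(subset_trans sRX nVX).
split=> //; rewrite isog_sym.
exact: isog_trans (sdprod_isog defX) (quotient_sdprodr_isog defG nsRX).
Qed.
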